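(* Let $\omega\in\mathbb{C}^*$. For every $[D]\in\mathcal{D}(\vec B)$, $$F([D])=\omega^{2\,\mathrm{wr}(D)}\;\mathcal{C}(b_{\rm out};\partial_{\rm out}D)\circ G([D])\circ\mathcal{C}(b_{\rm in};\partial_{\rm in}D),$$ where $\partial_{\rm out}D$ and $\partial_{\rm in}D$ carry their vertical orderings and $b_{\rm out},b_{\rm in}$ carry their boundary-orientations.
   Context: Directed biangle. Let $\mathbb{B}=[0,1]\times\mathbb{R}$ with its standard orientation, boundary arcs $b_{\rm out}=\{0\}\times\mathbb{R}$, $b_{\rm in}=\{1\}\times\mathbb{R}$; the $\mathbb{R}$-coordinate is the horizontal coordinate. The boundary-orientation (compatible with clockwise traversal) is the direction of increasing $\mathbb{R}$-coordinate on $b_{\rm out}$ and of decreasing $\mathbb{R}$-coordinate on $b_{\rm in}$. Diagrams. A boundary-ordered oriented tangle diagram $D$ in $\mathbb{B}$: compact oriented 1-manifold properly immersed in $\mathbb{B}$, with only finitely many transverse interior double points (crossings) carrying over/under information, plus a total order $\succ$ (''vertical ordering'') on the distinct endpoints on each of $b_{\rm in}$, $b_{\rm out}$; $\partial_{\rm in}D=\partial D\cap b_{\rm in}$, $\partial_{\rm out}D=\partial D\cap b_{\rm out}$. $\mathcal{D}(\vec B)$: classes modulo isotopy through such diagrams and framed Reidemeister moves I (cancellation of adjacent opposite kinks), II, III. Crossing sign: $+1$ if (tangent of over-strand, tangent of under-strand) is positively oriented, else $-1$; $\mathrm{wr}(D)$ = sum of signs. $[D_1]\otimes[D_2]$: disjoint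 union, $D_1$ at smaller horizontal coordinates, all endpoints of $D_2$ vertically above those of $D_1$ on each arc. $[D_1]\circ[D_2]$ (if $|\partial_{\rm in}D_1|=|\partial_{\rm out}D_2|$ and the horizontal-order-preserving bijection preserves vertical orders and orientations): glue $b_{\rm in}$ of $D_1$'s biangle to $b_{\rm out}$ of $D_2$'s. $V=\mathbb{C}^2$, basis $\xi_+,\xi_-$; factors of $V^{\otimes|\partial_{\rm in}D|}$, $V^{\otimes|\partial_{\rm out}D|}$ correspond to endpoints in increasing horizontal order. For a finite set $Z\subset b$ of a boundary arc $b$ and a state $s_0:Z\to\{\pm\}$, with basis vector $\xi^{s_0}=\xi_{s_0(z_1)}\otimes\cdots\otimes\xi_{s_0(z_k)}$ ($z_i$ in increasing horizontal order), the signed order correction amount is $\mathcal{C}(b;Z,s_0)=\sum_{x,y\in Z,\ x\prec y}\mathrm{sgn}(b;\overrightarrow{xy})\,s_0(x)s_0(y)$ (signs read as $\pm1$, $x\prec y$ in the vertical ordering), where $\mathrm{sgn}(b;\overrightarrow{xy})=+1$ if the direction from $x$ to $y$ along $b$ agrees with the boundary-orientation of $b$ and $-1$ otherwise; the signed order correction operator $\mathcal{C}(b;Z):V^{\otimes|Z|}\to V^{\otimes|Z|}$ is the diagonal map $\xi^{s_0}\mapsto\omega^{\mathcal{C}(b;Z,s_0)}\xi^{s_0}$. Elementary diagrams ($x_1,x_2\in b_{\rm in}$, $y_1,y_2\in b_{\rm out}$, with $x_1$ below $x_2$, $y_1$ below $y_2$ horizontally): identity (one arc $b_{\rm in}\to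 b_{\rm out}$); cup (one arc with ends $y_1\succ y_2$ on $b_{\rm out}$); cap (one arc with ends $x_1\succ x_2$ on $b_{\rm in}$); height exchange type 1 (disjoint arcs $x_1$–$y_1$, $x_2$–$y_2$, $x_1\succ x_2$, $y_2\succ y_1$) and type 2 ($x_2\succ x_1$, $y_1\succ y_2$); positive/negative crossing (arcs $x_1$–$y_2$, $x_2$–$y_1$ with one crossing of sign $+1$/$-1$, both oriented from $b_{\rm in}$ to $b_{\rm out}$ or both reversed, $x_1\succ x_2$, $y_1\succ y_2$). Orientations of non-crossing elementary arcs are arbitrary. $G$: the unique map $[D]\mapsto G([D]):V^{\otimes|\partial_{\rm in}D|}\to V^{\otimes|\partial_{\rm out}D|}$, multiplicative for $\circ$ and $\otimes$, with values: identity $\mapsto\mathrm{id}$; cup: $1\mapsto\xi_+\otimes\xi_--\omega^4\xi_-\otimes\xi_+$; cap: $\xi_+\otimes\xi_-\mapsto-\omega^{-4}$, $\xi_-\otimes\xi_+\mapsto1$, others $0$; height exchange type 1: $\xi_+\otimes\xi_-\mapsto\xi_+\otimes\xi_-+(\omega^4-\omega^{-4})\xi_-\otimes\xi_+$, others fixed, type 2 the inverse; positive crossing: $\xi_i\otimes\xi_i\mapsto\omega^{-4}\xi_i\otimes\xi_i$, $\xi_+\otimes\xi_-\mapsto\xi_-\otimes\xi_+$, $\xi_-\otimes\xi_+\mapsto\xi_+\otimes\xi_-+(\omega^{-4}-\omega^4)\xi_-\otimes\xi_+$; negative crossing the inverse. $F$ (Reshetikhin–Turaev operator invariant for the 2-dimensional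 representation of $\mathcal{U}_q(\mathfrak{sl}_2)$, known to exist): the unique map with the same source/target, multiplicative for $\circ$ and $\otimes$, with values: identity $\mapsto\mathrm{id}$; cup: $1\mapsto\omega\,\xi_+\otimes\xi_--\omega^5\xi_-\otimes\xi_+$; cap: $\xi_+\otimes\xi_-\mapsto-\omega^{-5}$, $\xi_-\otimes\xi_+\mapsto\omega^{-1}$, others $0$; height exchange type 1 (map $M$): $\xi_i\otimes\xi_i\mapsto\omega^2\xi_i\otimes\xi_i$, $\xi_+\otimes\xi_-\mapsto\omega^{-2}(\xi_+\otimes\xi_-+(\omega^4-\omega^{-4})\xi_-\otimes\xi_+)$, $\xi_-\otimes\xi_+\mapsto\omega^{-2}\xi_-\otimes\xi_+$; type 2: $M^{-1}$; positive crossing: $M^{-1}\circ P$ where $P(\xi_i\otimes\xi_j)=\xi_j\otimes\xi_i$; negative crossing: $(M^{-1}\circ P)^{-1}$. *)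

(* Combinatorial encoding of boundary-ordered oriented
   tangle diagrams in the directed biangle as formal composites
   (under o and (x)) of the elementary diagrams, together with the
   operator-valued invariants F and G defined by multiplicativity. *)
From HB Require Import structures.
From mathcomp Require Import all_boot all_order all_algebra.
Set Implicit Arguments. Unset Strict Implicit. Unset Printing Implicit Defensive.
Import Order.TTheory GRing.Theory Num.Theory.
Local Open Scope ring_scope.

(* Orientation bit of an endpoint: [true] iff the
   strand, at that endpoint, travels from the b_in side towards the
   b_out side (decreasing [0,1]-coordinate).  Orientations of
   non-crossing elementary arcs are arbitrary; both strands of an
   elementary crossing carry the same orientation.                    *)
Inductive elem : Type :=
| EId  of bool
| ECup of bool            (* cup, ends y1 > y2 on b_out (bit at y1)      *)
| ECap of bool            (* cap, ends x1 > x2 on b_in  (bit at x1)      *)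
| EHE1 of bool & bool     (* height exchange type 1 (bits of arcs x1-y1, x2-y2) *)
| EHE2 of bool & bool
| EPos of bool
| ENeg of bool.

Inductive diag : Type :=
| DEmpty
| DElem of elem
| DTens of diag & diag
| DComp of diag & diag.

(* A boundary (of one boundary arc) is the list of its endpoints in
   increasing horizontal order; each endpoint carries its vertical rank
   (0 = vertically lowest; the vertical ordering x < y is rank x < rank y)
   and its orientation bit. *)
Definition bdry := seq (nat * bool).

Definition elem_in (e : elem) : bdry :=
  match e with
  | EId o => [:: (0%N, o)]
  | ECup _ => [::]
  | ECap o => [:: (1%N, o); (0%N, ~~ o)]
  | EHE1 o1 o2 => [:: (1%N, o1); (0%N, o2)]
  | EHE2 o1 o2 => [:: (0%N, o1); (1%N, o2)]
  | EPos o => [:: (1%N, o); (0%N, o)]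
  | ENeg o => [:: (1%N, o); (0%N, o)]
  end.

Definition elem_out (e : elem) : bdry :=
  match e with
  | EId o => [:: (0%N, o)]
  | ECup o => [:: (1%N, o); (0%N, ~~ o)]
  | ECap _ => [::]
  | EHE1 o1 o2 => [:: (0%N, o1); (1%N, o2)]
  | EHE2 o1 o2 => [:: (1%N, o1); (0%N, o2)]
  | EPos o => [:: (1%N, o); (0%N, o)]
  | ENeg o => [:: (1%N, o); (0%N, o)]
  end.

(* In a tensor product the endpoints of d2 are vertically above those of d1. *)
Definition bshift (k : nat) (b : bdry) : bdry := [seq (p.1 + k, p.2)%N | p <- b].

Fixpoint in_bd (d : diag) : bdry :=
  match d with
  | DEmpty => [::]
  | DElem e => elem_in e
  | DTens d1 d2 => in_bd d1 ++ bshift (size (in_bd d1)) (in_bd d2)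
  | DComp d1 d2 => in_bd d2
  end.

Fixpoint out_bd (d : diag) : bdry :=
  match d with
  | DEmpty => [::]
  | DElem e => elem_out e
  | DTens d1 d2 => out_bd d1 ++ bshift (size (out_bd d1)) (out_bd d2)
  | DComp d1 d2 => out_bd d1
  end.

(* Composition is defined iff the horizontal-order-preserving bijection
   from the in-boundary of d1 to the out-boundary of d2 preserves
   vertical orders and orientations. *)
Fixpoint wf (d : diag) : bool :=
  match d with
  | DEmpty => true
  | DElem _ => true
  | DTens d1 d2 => wf d1 && wf d2
  | DComp d1 d2 => [&& wf d1, wf d2 & in_bd d1 == out_bd d2]
  end.

Fixpoint wr (d : diag) : int :=
  match d with
  | DEmpty => 0
  | DElem (EPos _) => 1
  | DElem (ENeg _) => -1
  | DElem _ => 0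
  | DTens d1 d2 => wr d1 + wr d2
  | DComp d1 d2 => wr d1 + wr d2
  end.

(* Linear maps V^{(x) m} -> V^{(x) n}, V = R^2 with basis xi_+ (true),
   xi_- (false).  [f t s] is the coefficient of xi^t in f(xi^s);
   t, s are states listed in increasing horizontal order.             *)
Section Ops.
Variable R : fieldType.

Definition op := seq bool -> seq bool -> R.

Definition op_comp (k : nat) (f g : op) : op :=
  fun t s => \sum_(u : k.-tuple bool) f t u * g u s.

Definition op_tens (n1 m1 : nat) (f g : op) : op :=
  fun t s => f (take n1 t) (take m1 s) * g (drop n1 t) (drop m1 s).

Definition op_scale (c : R) (f : op) : op := fun t s => c * f t s.

Definition op_eq (n m : nat) (f g : op) : Prop :=
  forall (t : n.-tuple bool) (s : m.-tuple bool), f t s = g t s.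

(* two-factor maps given by 4x4 matrices; basis order ++, +-, -+, -- *)
Definition dec2 (i : 'I_4) : bool * bool := ((i < 2)%N, ~~ odd i).
Definition enc2 (a b : bool) : 'I_4 := inord ((~~ a) * 2 + (~~ b))%N.
Definition mk4 (f : bool -> bool -> bool -> bool -> R) : 'M[R]_4 :=
  \matrix_(i < 4, j < 4) f (dec2 i).1 (dec2 i).2 (dec2 j).1 (dec2 j).2.
Definition op2 (A : 'M[R]_4) : op :=
  fun t s => match t, s with
             | [:: t1; t2], [:: s1; s2] => A (enc2 t1 t2) (enc2 s1 s2)
             | _, _ => 0
             end.

Definition op_id : op :=
  fun t s => match t, s with [:: a], [:: b] => (a == b)%:R | _, _ => 0 end.
Definition op_empty : op :=
  fun t s => match t, s with [::], [::] => 1 | _, _ => 0 end.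

Definition Pmx : 'M[R]_4 := mk4 (fun t1 t2 s1 s2 => ((t1 == s2) && (t2 == s1))%:R).

Variable w : R.

Definition G_cup : op := fun t s =>
  match t, s with
  | [:: true; false], [::] => 1
  | [:: false; true], [::] => - w ^+ 4
  | _, _ => 0 end.
Definition G_cap : op := fun t s =>
  match t, s with
  | [::], [:: true; false] => - w ^- 4
  | [::], [:: false; true] => 1
  | _, _ => 0 end.
Definition G_HE1mx : 'M[R]_4 := mk4 (fun t1 t2 s1 s2 =>
  match s1, s2, t1, t2 with
  | true, false, true, false => 1
  | true, false, false, true => w ^+ 4 - w ^- 4
  | true, false, _, _ => 0
  | _, _, _, _ => ((t1 == s1) && (t2 == s2))%:R
  end).
Definition G_Posmx : 'M[R]_4 := mk4 (fun t1 t2 s1 s2 =>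
  match s1, s2, t1, t2 with
  | true, false, false, true => 1
  | true, false, _, _ => 0
  | false, true, true, false => 1
  | false, true, false, true => w ^- 4 - w ^+ 4
  | false, true, _, _ => 0
  | _, _, _, _ => if (t1 == s1) && (t2 == s2) then w ^- 4 else 0
  end).

Definition elemG (e : elem) : op :=
  match e with
  | EId _ => op_id
  | ECup _ => G_cup
  | ECap _ => G_cap
  | EHE1 _ _ => op2 G_HE1mx
  | EHE2 _ _ => op2 (invmx G_HE1mx)
  | EPos _ => op2 G_Posmx
  | ENeg _ => op2 (invmx G_Posmx)
  end.

Definition F_cup : op := fun t s =>
  match t, s with
  | [:: true; false], [::] => w
  | [:: false; true], [::] => - w ^+ 5
  | _, _ => 0 end.
Definition F_cap : op := fun t s =>
  match t, s with
  | [::], [:: true; false] => - w ^- 5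
  | [::], [:: false; true] => w ^-1
  | _, _ => 0 end.
Definition F_Mmx : 'M[R]_4 := mk4 (fun t1 t2 s1 s2 =>
  match s1, s2, t1, t2 with
  | true, false, true, false => w ^- 2
  | true, false, false, true => w ^- 2 * (w ^+ 4 - w ^- 4)
  | true, false, _, _ => 0
  | false, true, false, true => w ^- 2
  | false, true, _, _ => 0
  | _, _, _, _ => if (t1 == s1) && (t2 == s2) then w ^+ 2 else 0
  end).

Definition elemF (e : elem) : op :=
  match e with
  | EId _ => op_id
  | ECup _ => F_cup
  | ECap _ => F_cap
  | EHE1 _ _ => op2 F_Mmx
  | EHE2 _ _ => op2 (invmx F_Mmx)
  | EPos _ => op2 (invmx F_Mmx *m Pmx)
  | ENeg _ => op2 (invmx (invmx F_Mmx *m Pmx))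
  end.

Fixpoint eval (gen : elem -> op) (d : diag) : op :=
  match d with
  | DEmpty => op_empty
  | DElem e => gen e
  | DTens d1 d2 => op_tens (size (out_bd d1)) (size (in_bd d1)) (eval gen d1) (eval gen d2)
  | DComp d1 d2 => op_comp (size (in_bd d1)) (eval gen d1) (eval gen d2)
  end.

Definition Fop (d : diag) : op := eval elemF d.
Definition Gop (d : diag) : op := eval elemG d.

Definition bsgn (b : bool) : int := if b then 1 else -1.

(* sgn(b; x->y) for endpoints at horizontal positions i, j:
   on b_out ([isout = true]) the boundary orientation is increasing
   horizontal coordinate, on b_in it is decreasing. *)
Definition dirsgn (isout : bool) (i j : nat) : int :=
  if isout then (if (i < j)%N then 1 else -1) else (if (j < i)%N then 1 else -1).

Definition corr (isout : bool) (Z : bdry) (s0 : seq bool) : int :=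
  \sum_(i < size Z) \sum_(j < size Z)
    if ((nth (0%N, true) Z i).1 < (nth (0%N, true) Z j).1)%N
    then dirsgn isout i j * bsgn (nth true s0 i) * bsgn (nth true s0 j)
    else 0.

Definition Cop (isout : bool) (Z : bdry) : op :=
  fun t s => if t == s then w ^ corr isout Z s else 0.

End Ops.

From HB Require Import structures.
From mathcomp Require Import all_boot all_order all_algebra.
From mathcomp Require Import ring.
Set Implicit Arguments. Unset Strict Implicit. Unset Printing Implicit Defensive.
Import Order.TTheory GRing.Theory Num.Theory.
Local Open Scope ring_scope.

(* Both sides are multiplicative, so it suffices to prove the entrywise
   identity  F(d)_{t,s} = w^(2 wr d + C_out(t) + C_in(s)) G(d)_{t,s},
   which on elementary diagrams is a direct computation.  It survives
   composition because the two corrections at the glued boundary are read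
   with opposite boundary orientations and cancel.  For a tensor product,
   the correction of a concatenated boundary is the sum of the two
   corrections plus the cross term (charge of the lower part) * (charge of
   the upper part), with sign + on b_out and - on b_in; since G conserves
   the charge (number of xi_+ minus number of xi_-), the cross terms at the
   two boundaries cancel as well. *)

Section FourByFour.
Variable R : fieldType.

Lemma op2_mk4 (f : bool -> bool -> bool -> bool -> R) a b c d :
  op2 (mk4 f) [:: a; b] [:: c; d] = f a b c d.
Proof.
by rewrite /op2 /mk4 mxE /enc2 /dec2; case: a; case: b; case: c; case: d;
  rewrite /= !inordK.
Qed.

Lemma eq_mk4 (f g : bool -> bool -> bool -> bool -> R) :
  (forall a b c d, f a b c d = g a b c d) -> mk4 f = mk4 g.
Proof. by move=> fg; apply/matrixP => i j; rewrite !mxE fg. Qed.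

Lemma mulmx_mk4 (f g : bool -> bool -> bool -> bool -> R) :
  mk4 f *m mk4 g = mk4 (fun a b c d =>
    f a b true true * g true true c d + f a b true false * g true false c d +
    f a b false true * g false true c d + f a b false false * g false false c d).
Proof.
apply/matrixP => i j; rewrite !mxE !big_ord_recl big_ord0 !mxE /dec2 /=.
by rewrite addr0 !addrA.
Qed.

Lemma mk4_1 : mk4 (fun a b c d => ((a == c) && (b == d))%:R) = 1%:M :> 'M[R]_4.
Proof.
apply/matrixP => i j; rewrite !mxE /dec2.
by case: i => [[|[|[|[|i]]]] Hi] //; case: j => [[|[|[|[|j]]]] Hj].
Qed.

Lemma invmx_eq (n : nat) (A B : 'M[R]_n) : A *m B = 1%:M -> invmx A = B.
Proof.
move=> AB; have [uA _] := mulmx1_unit AB.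
by rewrite -[invmx A]mulmx1 -AB mulmxA mulVmx // mul1mx.
Qed.

End FourByFour.

Definition charge (s : seq bool) : int := \sum_(x <- s) bsgn x.

Lemma charge_cat s1 s2 : charge (s1 ++ s2) = charge s1 + charge s2.
Proof. exact: big_cat. Qed.

Lemma charge_nth s : charge s = \sum_(i < size s) bsgn (nth true s i).
Proof. by rewrite /charge (big_nth true) big_mkord. Qed.

Lemma corr_in_out Z s : corr false Z s = - corr true Z s.
Proof.
rewrite /corr -sumrN; apply: eq_bigr => i _; rewrite -sumrN; apply: eq_bigr => j _.
case: ifP => [rank_ij|]; last by rewrite oppr0.
rewrite /dirsgn; case: (ltngtP i j) => ij; rewrite ?mulN1r ?mulNr ?opprK ?mul1r //.
by move: rank_ij; rewrite (val_inj ij) ltnn.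
Qed.

Definition corr_summand b (Z : bdry) (s : seq bool) (i j : nat) : int :=
  if ((nth (0%N, true) Z i).1 < (nth (0%N, true) Z j).1)%N
  then dirsgn b i j * bsgn (nth true s i) * bsgn (nth true s j) else 0.

Lemma corrE b Z s :
  corr b Z s = \sum_(i < size Z) \sum_(j < size Z) corr_summand b Z s i j.
Proof. by []. Qed.

Lemma sum_square_cat n m (f : nat -> nat -> int) :
  \sum_(i < n + m) \sum_(j < n + m) f i j =
  \sum_(i < n) \sum_(j < n) f i j + \sum_(i < n) \sum_(j < m) f i (n + j)%N +
  \sum_(i < m) \sum_(j < n) f (n + i)%N j +
  \sum_(i < m) \sum_(j < m) f (n + i)%N (n + j)%N.
Proof.
rewrite big_split_ord /= -!big_split /= -addrA -big_split /=.
by congr (_ + _); apply: eq_bigr => i _; rewrite big_split_ord.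
Qed.

Lemma dirsgn_shift b n i j : dirsgn b (n + i) (n + j) = dirsgn b i j.
Proof. by rewrite /dirsgn !ltn_add2l. Qed.

(* Ranks below the size guarantee that, in a tensor product, the endpoints of
   the first factor lie vertically below those of the shifted second one. *)
Definition ranked (Z : bdry) : bool := all (fun p => p.1 < size Z)%N Z.

Lemma ranked_tens Z1 Z2 :
  ranked Z1 -> ranked Z2 -> ranked (Z1 ++ bshift (size Z1) Z2).
Proof.
move=> r1 r2; rewrite /ranked all_cat size_cat /bshift size_map all_map.
apply/andP; split; first by apply: sub_all r1 => p /= lt_p; rewrite ltn_addr.
by apply: sub_all r2 => p /=; rewrite addnC ltn_add2l.
Qed.

Lemma ranked_bd d : ranked (out_bd d) && ranked (in_bd d).
Proof.
elim: d => [|e|d1 IH1 d2 IH2|d1 IH1 d2 IH2] //=; first by case: e.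
- by case/andP: IH1 => ? ?; case/andP: IH2 => ? ?; rewrite !ranked_tens.
- by case/andP: IH1 => ->; case/andP: IH2 => _ ->.
Qed.

Lemma corr_tens b Z1 Z2 s1 s2 :
  ranked Z1 -> size s1 = size Z1 -> size s2 = size Z2 ->
  corr b (Z1 ++ bshift (size Z1) Z2) (s1 ++ s2) =
  corr b Z1 s1 + corr b Z2 s2 + bsgn b * (charge s1 * charge s2).
Proof.
move=> r1 size_s1 size_s2; set n := size Z1.
set Z := Z1 ++ _; set s := s1 ++ s2.
have Z_lo i : (i < n)%N -> nth (0%N, true) Z i = nth (0%N, true) Z1 i.
  by move=> lt_in; rewrite nth_cat lt_in.
have Z_hi i : (i < size Z2)%N ->
    nth (0%N, true) Z (n + i) = ((nth (0%N, true) Z2 i).1 + n, (nth (0%N, true) Z2 i).2)%N.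
  by move=> lt_i; rewrite nth_cat ltnNge leq_addr /= addKn (nth_map (0%N, true)).
have s_lo i : (i < n)%N -> nth true s i = nth true s1 i.
  by move=> lt_in; rewrite nth_cat size_s1 lt_in.
have s_hi i : nth true s (n + i) = nth true s2 i.
  by rewrite nth_cat size_s1 ltnNge leq_addr /= addKn.
have rank_lo i : (i < n)%N -> ((nth (0%N, true) Z1 i).1 < n)%N.
  by move=> lt_in; apply: (allP r1) _ (mem_nth _ lt_in).
rewrite !corrE size_cat /bshift size_map sum_square_cat -/n.
have -> : \sum_(i < size Z2) \sum_(j < n) corr_summand b Z s (n + i) j = 0.
  apply: big1 => i _; apply: big1 => j _; rewrite /corr_summand Z_hi // Z_lo //=.
  by rewrite ltnNge (leq_trans (ltnW (rank_lo _ (ltn_ord j)))) ?leq_addl.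
rewrite addr0 -addrA [_ + \sum_(i < size Z2) _]addrC addrA; congr (_ + _ + _).
- apply: eq_bigr => i _; apply: eq_bigr => j _.
  by rewrite /corr_summand !Z_lo ?s_lo.
- apply: eq_bigr => i _; apply: eq_bigr => j _.
  by rewrite /corr_summand !Z_hi //= !s_hi ltn_add2r dirsgn_shift.
- rewrite !charge_nth size_s1 size_s2 mulr_suml mulr_sumr; apply: eq_bigr => i _.
  rewrite !mulr_sumr; apply: eq_bigr => j _.
  rewrite /corr_summand Z_lo // Z_hi //= s_lo // s_hi.
  rewrite (leq_trans (rank_lo _ (ltn_ord i))) ?leq_addl //.
  have lt_i_nj : (i < n + j)%N by rewrite ltn_addr.
  by rewrite /dirsgn lt_i_nj ltnNge ltnW //; case: b; rewrite mulrA.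
Qed.

Section Invariants.
Variable R : fieldType.
Variable w : R.
Hypothesis w_neq0 : w != 0.

Definition G_HE2 : bool -> bool -> bool -> bool -> R := fun t1 t2 s1 s2 =>
  match s1, s2, t1, t2 with
  | true, false, true, false => 1
  | true, false, false, true => - (w ^+ 4 - w ^- 4)
  | true, false, _, _ => 0
  | _, _, _, _ => ((t1 == s1) && (t2 == s2))%:R
  end.

Definition G_Neg : bool -> bool -> bool -> bool -> R := fun t1 t2 s1 s2 =>
  match s1, s2, t1, t2 with
  | true, false, true, false => w ^+ 4 - w ^- 4
  | true, false, false, true => 1
  | true, false, _, _ => 0
  | false, true, true, false => 1
  | false, true, _, _ => 0
  | _, _, _, _ => if (t1 == s1) && (t2 == s2) then w ^+ 4 else 0
  end.

Definition F_Minv : bool -> bool -> bool -> bool -> R := fun t1 t2 s1 s2 =>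
  match s1, s2, t1, t2 with
  | true, false, true, false => w ^+ 2
  | true, false, false, true => - (w ^+ 2 * (w ^+ 4 - w ^- 4))
  | true, false, _, _ => 0
  | false, true, false, true => w ^+ 2
  | false, true, _, _ => 0
  | _, _, _, _ => if (t1 == s1) && (t2 == s2) then w ^- 2 else 0
  end.

Definition F_Pos : bool -> bool -> bool -> bool -> R := fun t1 t2 s1 s2 =>
  match s1, s2, t1, t2 with
  | true, false, false, true => w ^+ 2
  | true, false, _, _ => 0
  | false, true, true, false => w ^+ 2
  | false, true, false, true => - (w ^+ 2 * (w ^+ 4 - w ^- 4))
  | false, true, _, _ => 0
  | _, _, _, _ => if (t1 == s1) && (t2 == s2) then w ^- 2 else 0
  end.

Definition F_Neg : bool -> bool -> bool -> bool -> R := fun t1 t2 s1 s2 =>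
  match s1, s2, t1, t2 with
  | true, false, false, true => w ^- 2
  | true, false, true, false => w ^- 2 * (w ^+ 4 - w ^- 4)
  | true, false, _, _ => 0
  | false, true, true, false => w ^- 2
  | false, true, _, _ => 0
  | _, _, _, _ => if (t1 == s1) && (t2 == s2) then w ^+ 2 else 0
  end.

Ltac mk4_inverse := apply: invmx_eq; rewrite mulmx_mk4 -mk4_1; apply: eq_mk4;
  do 4 case => /=; field; rewrite ?expf_neq0.

Lemma invmx_G_HE1 : invmx (G_HE1mx w) = mk4 G_HE2.
Proof. by mk4_inverse. Qed.

Lemma invmx_G_Pos : invmx (G_Posmx w) = mk4 G_Neg.
Proof. by mk4_inverse. Qed.

Lemma invmx_F_M : invmx (F_Mmx w) = mk4 F_Minv.
Proof. by mk4_inverse. Qed.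

Lemma F_Pos_mx : invmx (F_Mmx w) *m Pmx R = mk4 F_Pos.
Proof. by rewrite invmx_F_M mulmx_mk4; apply: eq_mk4; do 4 case => /=; ring. Qed.

Lemma invmx_F_Pos : invmx (invmx (F_Mmx w) *m Pmx R) = mk4 F_Neg.
Proof. by rewrite F_Pos_mx; mk4_inverse. Qed.

Lemma Gop_elem_charge e t s : Gop w (DElem e) t s != 0 -> charge t = charge s.
Proof.
rewrite /Gop /=; case: e => [o|o|o|o1 o2|o1 o2|o|o] /=;
  rewrite ?invmx_G_HE1 ?invmx_G_Pos;
  case: t => [|[] [|[] [|? ?]]]; case: s => [|[] [|[] [|? ?]]];
  by rewrite ?op2_mk4 /= ?eqxx //= /charge ?big_cons ?big_nil.
Qed.

Lemma Gop_charge d t s : Gop w d t s != 0 -> charge t = charge s.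
Proof.
elim: d t s => [|e|d1 IH1 d2 IH2|d1 IH1 d2 IH2] t s.
- by rewrite /Gop /=; case: t => [|? ?]; case: s => [|? ?]; rewrite /= ?eqxx.
- exact: Gop_elem_charge.
- rewrite /Gop /= /op_tens mulf_eq0 negb_or => /andP[nz1 nz2].
  rewrite -(cat_take_drop (size (out_bd d1)) t) -(cat_take_drop (size (in_bd d1)) s).
  by rewrite !charge_cat (IH1 _ _ nz1) (IH2 _ _ nz2).
- rewrite /Gop /= /op_comp => nz.
  have [u] : exists u : (size (in_bd d1)).-tuple bool,
      eval (elemG w) d1 t u * eval (elemG w) d2 u s != 0.
    apply/existsP; apply: contraNT nz => /existsPn all0.
    by apply/eqP/big1 => u _; apply/eqP/negbNE/all0.
  by rewrite mulf_eq0 negb_or => /andP[nz1 nz2]; rewrite (IH1 _ _ nz1) (IH2 _ _ nz2).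
Qed.

Definition factorizes (d : diag) : Prop :=
  forall t s, size t = size (out_bd d) -> size s = size (in_bd d) ->
  Fop w d t s =
  w ^ (2 * wr d + corr true (out_bd d) t + corr false (in_bd d) s) * Gop w d t s.

(* [field] only understands literal integer exponents. *)
Ltac eval_exprz := repeat match goal with |- context [?x ^ ?e] =>
  let v := eval vm_compute in e in progress rewrite -[e]/v end; rewrite /exprz.

Lemma factorizes_elem e : factorizes (DElem e).
Proof.
rewrite /factorizes /Fop /Gop /=; case: e => [o|o|o|o1 o2|o1 o2|o|o] /=;
  rewrite ?invmx_F_Pos ?F_Pos_mx ?invmx_F_M ?invmx_G_HE1 ?invmx_G_Pos;
  case=> [|[] [|[] [|? ?]]]; case=> [|[] [|[] [|? ?]]] => // _ _;
  rewrite ?op2_mk4 /corr !big_ord_recr !big_ord0 /=.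
all: by eval_exprz; field; rewrite ?expf_neq0.
Qed.

Lemma factorizes_tens d1 d2 :
  factorizes d1 -> factorizes d2 -> factorizes (DTens d1 d2).
Proof.
move=> fd1 fd2 t s /=; rewrite !size_cat /bshift !size_map => size_t size_s.
case/andP: (ranked_bd d1) => r_out r_in.
set n := size (out_bd d1); set m := size (in_bd d1).
have size_t1 : size (take n t) = n by rewrite size_takel // size_t leq_addr.
have size_s1 : size (take m s) = m by rewrite size_takel // size_s leq_addr.
have size_t2 : size (drop n t) = size (out_bd d2) by rewrite size_drop size_t addKn.
have size_s2 : size (drop m s) = size (in_bd d2) by rewrite size_drop size_s addKn.
rewrite /Fop /Gop /= /op_tens -/(Fop w d1) -/(Fop w d2) -/(Gop w d1) -/(Gop w d2).
rewrite (fd1 _ _ size_t1 size_s1) (fd2 _ _ size_t2 size_s2) mulrACA.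
set G12 := Gop w d1 _ _ * Gop w d2 _ _.
have [->|nz] := eqVneq G12 0; first by rewrite !mulr0.
move: (nz); rewrite mulf_eq0 negb_or => /andP[/Gop_charge q1 /Gop_charge q2].
rewrite -{3}(cat_take_drop n t) -{3}(cat_take_drop m s) !corr_tens // q1 q2.
by rewrite -!expfzDr //; congr (w ^ _ * _); rewrite /= -/m; ring.
Qed.

Lemma factorizes_comp d1 d2 : in_bd d1 = out_bd d2 ->
  factorizes d1 -> factorizes d2 -> factorizes (DComp d1 d2).
Proof.
move=> glue fd1 fd2 t s /= size_t size_s.
rewrite /Fop /Gop /= /op_comp -/(Fop w d1) -/(Fop w d2) -/(Gop w d1) -/(Gop w d2).
rewrite mulr_sumr; apply: eq_bigr => u _.
have size_u : size u = size (in_bd d1) by rewrite size_tuple.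
rewrite (fd1 _ _ size_t size_u) (fd2 _ _ _ size_s) -?glue //.
rewrite mulrACA -expfzDr // [corr false (in_bd d1) u]corr_in_out.
by congr (w ^ _ * _); ring.
Qed.

Lemma wf_factorizes d : wf d -> factorizes d.
Proof.
elim: d => [|e|d1 IH1 d2 IH2|d1 IH1 d2 IH2] /= wf_d.
- by case=> [|//] [|//] _ _; rewrite /Fop /Gop /corr /= !big_ord0 mulr1.
- exact: factorizes_elem.
- by case/andP: wf_d => /IH1 ? /IH2 ?; apply: factorizes_tens.
- by case/and3P: wf_d => /IH1 ? /IH2 ? /eqP ?; apply: factorizes_comp.
Qed.

Lemma sum_Cop_mul b Z n (t : n.-tuple bool) (f : seq bool -> R) :
  \sum_(u : n.-tuple bool) Cop w b Z t u * f u = w ^ corr b Z t * f t.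
Proof.
rewrite (bigD1 t) //= big1 ?addr0; first by rewrite /Cop eqxx.
by move=> u ut; rewrite /Cop val_eqE eq_sym (negbTE ut) mul0r.
Qed.

Lemma sum_mul_Cop b Z n (s : n.-tuple bool) (f : seq bool -> R) :
  \sum_(u : n.-tuple bool) f u * Cop w b Z u s = f s * w ^ corr b Z s.
Proof.
rewrite (bigD1 s) //= big1 ?addr0; first by rewrite /Cop eqxx.
by move=> u us; rewrite /Cop val_eqE (negbTE us) mulr0.
Qed.

End Invariants.

Unset Implicit Arguments.

Theorem lemma5p15 (R : fieldType) (w : R) (hw : w != 0) (d : diag) (hd : wf d) :
  op_eq (size (out_bd d)) (size (in_bd d))
    (Fop w d)
    (op_scale (w ^ (2 * wr d))
       (op_comp (size (out_bd d)) (Cop w true (out_bd d))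
          (op_comp (size (in_bd d)) (Gop w d) (Cop w false (in_bd d))))).
Proof.
move=> t s; rewrite /op_scale /op_comp.
set Gin := fun u => \sum_(v : (size (in_bd d)).-tuple bool)
  Gop w d u v * Cop w false (in_bd d) v s.
rewrite (sum_Cop_mul _ _ _ _ Gin) /Gin (sum_mul_Cop _ _ _ _ (Gop w d t)).
rewrite (wf_factorizes hw hd) ?size_tuple //.
by rewrite !expfzDr //; ring.
Qed.
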